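(* Let $I\subset\mathbb{R}$ be an open interval, $W\subset I$ a countable dense subset, $\mathrm{gr}\colon W\to\mathbb{N}$ a grading with finite fibers, and $K>1$. Then the division metric $d$ with steepness $K$ is a metric on the fractured interval $\check I$ which induces the topology of $\check I$.
   Context: The divided interval of $I$ at $W$ is $\hat I = \{w^{L}, \hat w, w^{R} : w\in W\}\sqcup (I\smallsetminus W)$, with $\pi\colon\hat I\to I$ sending $w^L,\hat w,w^R$ to $w$ and fixing $I\smallsetminus W$, totally ordered so that $\pi$ is order preserving and $w^L<\hat w<w^R$. For $a,b\in\hat I\cup\{\pm\infty\}$, $(a,b)=\{s: a<s<b\}$; basis intervals are the nonempty $(a,b)$ other than those with $a=w^L$ or $b=w^R$, and they generate the topology of $\hat I$. The fractured interval is $\check I=\hat I\smallsetminus\{\hat w:w\in W\}$ with the subspace topology. The height of $\hat w$ ($w\in W$) is $K^{-\mathrm{gr}(w)}$, and every other point of $\hat I$ has height $0$. The division metric is $d(a,a)=0$ and, for $a<b$ in $\check I$, $d(a,b)=d(b,a)$ is the maximum height of the points of $(a,b)\subset\hat I$. *)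

From Stdlib Require Import Reals List ClassicalEpsilon.
Open Scope R_scope.

(* Open interval (lo, hi) of R; None encodes -oo (for lo) / +oo (for hi). *)
Definition ointerval (lo hi : option R) (x : R) : Prop :=
  (match lo with Some a => a < x | None => True end) /\
  (match hi with Some b => x < b | None => True end).

(* Points of the divided interval are encoded as pairs (x, t) with x in I:
   (w, TL) = w^L, (w, TM) = \hat w, (w, TR) = w^R for w in W,
   and (x, TM) = x for x in I \ W.  pi = fst. *)
Inductive tag := TL | TM | TR.

Definition tag_lt (t u : tag) : Prop :=
  match t, u with
  | TL, TM | TL, TR | TM, TR => True
  | _, _ => False
  end.

Definition pt := (R * tag)%type.

Definition plt (a b : pt) : Prop :=
  fst a < fst b \/ (fst a = fst b /\ tag_lt (snd a) (snd b)).

Section Divided.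
Variables (I W : R -> Prop) (gr : R -> nat) (K : R).

Definition inHat (p : pt) : Prop := I (fst p) /\ (W (fst p) \/ snd p = TM).

Definition inCheck (p : pt) : Prop := inHat p /\ ~ (W (fst p) /\ snd p = TM).

Definition height (p : pt) : R :=
  if excluded_middle_informative (W (fst p) /\ snd p = TM)
  then / (K ^ gr (fst p)) else 0.

Inductive ext := NegInf | Fin (p : pt) | PosInf.

Definition ext_ok (a : ext) : Prop :=
  match a with Fin p => inHat p | _ => True end.

Definition above (a : ext) (s : pt) : Prop :=
  match a with NegInf => True | Fin p => plt p s | PosInf => False end.

Definition below (b : ext) (s : pt) : Prop :=
  match b with NegInf => False | Fin p => plt s p | PosInf => True end.

Definition ointv (a b : ext) (s : pt) : Prop := inHat s /\ above a s /\ below b s.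

Definition basis_interval (S : pt -> Prop) : Prop :=
  exists a b : ext,
    ext_ok a /\ ext_ok b /\ (exists s, ointv a b s) /\
    (forall w, a <> Fin (w, TL)) /\ (forall w, b <> Fin (w, TR)) /\
    (forall s, S s <-> ointv a b s).

(* topology on \hat I generated by the basis intervals:
   U is open iff each of its points lies in a finite intersection
   of basis intervals (computed inside \hat I) contained in U. *)
Definition hat_open (U : pt -> Prop) : Prop :=
  (forall s, U s -> inHat s) /\
  forall s, U s -> exists Bs : list (pt -> Prop),
    Forall basis_interval Bs /\ Forall (fun B => B s) Bs /\
    (forall t, inHat t -> Forall (fun B => B t) Bs -> U t).

Definition check_open (V : pt -> Prop) : Prop :=
  exists U, hat_open U /\ forall s, V s <-> (U s /\ inCheck s).

Definition max_height (a b : pt) : R :=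
  epsilon (inhabits 0)
    (fun m => (exists s, ointv (Fin a) (Fin b) s /\ height s = m) /\
              (forall s, ointv (Fin a) (Fin b) s -> height s <= m)).

Definition division_metric (a b : pt) : R :=
  if excluded_middle_informative (a = b) then 0
  else if excluded_middle_informative (plt a b) then max_height a b
  else max_height b a.

End Divided.

Definition is_metric_on (X : pt -> Prop) (d : pt -> pt -> R) : Prop :=
  forall x y z, X x -> X y -> X z ->
    0 <= d x y /\ (d x y = 0 <-> x = y) /\ d x y = d y x /\
    d x z <= d x y + d y z.

Definition metric_open (X : pt -> Prop) (d : pt -> pt -> R) (V : pt -> Prop) : Prop :=
  (forall s, V s -> X s) /\
  forall s, V s -> exists e, 0 < e /\ forall t, X t -> d s t < e -> V t.

From Stdlib Require Import Reals List.
Open Scope R_scope.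
From Stdlib Require Import Lra Lia Arith Classical ClassicalEpsilon.

(* Between two distinct points of the fractured interval lies some removed
   point \hat w, and among those the one of least grade has maximal height;
   so d(x, y) > 0 is the height of a single point strictly between x and y.
   That point is y, or lies between x and y, or between y and z, which makes
   d an ultrametric.  A ball of radius K^{-gr w} around s cannot cross
   \hat w, so every basis interval around s contains a ball.  Conversely
   only finitely many \hat w have height >= e, and the interval between the
   nearest of them on either side of s lies inside the e-ball. *)

Lemma plt_irrefl a : ~ plt a a.
Proof. destruct a as [x t]; unfold plt; simpl; intros [H|[_ H]]; [lra|destruct t; exact H]. Qed.

Lemma plt_trans a b c : plt a b -> plt b c -> plt a c.
Proof.
  destruct a as [x t], b as [y u], c as [z v]; unfold plt; simpl.
  intros [H|[-> H]] [H'|[-> H']]; try (left; lra).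
  right; split; auto; destruct t, u, v; simpl in *; tauto.
Qed.

Lemma plt_trichotomy a b : a = b \/ plt a b \/ plt b a.
Proof.
  destruct a as [x t], b as [y u]; unfold plt; simpl.
  destruct (Rtotal_order x y) as [H|[->|H]]; auto.
  destruct t, u; simpl; auto 10.
Qed.

Lemma plt_asym a b : plt a b -> ~ plt b a.
Proof. intros H H'; apply (plt_irrefl a); eapply plt_trans; eauto. Qed.

Lemma plt_hat v u : plt (v, TM) (u, TM) -> v < u.
Proof. unfold plt; simpl; intros [H|[_ H]]; [exact H|contradiction]. Qed.

Lemma above_plt a x z : above a x -> plt x z -> above a z.
Proof. destruct a; simpl; auto; intros; eapply plt_trans; eauto. Qed.

Lemma below_plt b x z : below b x -> plt z x -> below b z.
Proof. destruct b; simpl; auto; intros; eapply plt_trans; eauto. Qed.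

Lemma list_max_exists {A : Type} (le : A -> A -> Prop) (L : list A) (P : A -> Prop) :
  (forall x y, le x y \/ le y x) -> (forall x y z, le x y -> le y z -> le x z) ->
  (exists x, In x L /\ P x) ->
  exists m, In m L /\ P m /\ forall x, In x L -> P x -> le x m.
Proof.
  intros total trans; induction L as [|y L IH]; intros [x [Hx Px]]; [destruct Hx|].
  assert (refl : forall z, le z z) by (intros z; destruct (total z z); auto).
  destruct (classic (exists x, In x L /\ P x)) as [E|NE].
  - destruct (IH E) as [m [Hm [Pm Mm]]].
    destruct (classic (P y)) as [Py|Ny].
    + destruct (total y m) as [Hym|Hmy].
      * exists m; split; [right; auto|split; auto]. intros z [<-|Hz] Pz; auto.
      * exists y; split; [left; auto|split; auto]. intros z [<-|Hz] Pz; eauto.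
    + exists m; split; [right; auto|split; auto]. intros z [<-|Hz] Pz; [contradiction|auto].
  - destruct Hx as [<-|Hx]; [|exfalso; eauto].
    exists y; split; [left; auto|split; auto]. intros z [<-|Hz] Pz; [auto|exfalso; eauto].
Qed.

Lemma inv_pow_pos K n : 0 < K -> 0 < / K ^ n.
Proof. intros HK; apply Rinv_0_lt_compat, pow_lt, HK. Qed.

Lemma inv_pow_ge_bounded K e : 1 < K -> 0 < e ->
  exists N, forall n, e <= / K ^ n -> (n < N)%nat.
Proof.
  intros HK He. destruct (Pow_x_infinity K) with (b := / e + 1) as [N HN].
  { rewrite Rabs_pos_eq; lra. }
  exists N. intros n Hn. destruct (Nat.lt_ge_cases n N) as [|Hge]; auto. exfalso.
  specialize (HN n Hge). rewrite Rabs_pos_eq in HN by (left; apply pow_lt; lra).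
  assert (Kp : 0 < K ^ n) by (apply pow_lt; lra).
  assert (/ K ^ n < e).
  { rewrite <- (Rinv_inv e). apply Rinv_lt_contravar; [|lra].
    apply Rmult_lt_0_compat; auto. apply Rinv_0_lt_compat; auto. }
  lra.
Qed.

Section DivisionMetric.

Variables (I W : R -> Prop) (gr : R -> nat) (K : R).
Hypothesis W_in_I : forall w, W w -> I w.
Hypothesis W_dense : forall x y, I x -> I y -> x < y -> exists w, W w /\ x < w < y.
Hypothesis K_gt_1 : 1 < K.
Hypothesis grade_fibers_finite :
  forall n : nat, exists l : list R, forall w, W w -> gr w = n -> In w l.

Local Notation hatI := (inHat I W).
Local Notation checkI := (inCheck I W).
Local Notation ointvI := (ointv I W).
Local Notation ht := (height W gr K).
Local Notation d := (division_metric I W gr K).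

Lemma hat_in_hatI v : W v -> hatI (v, TM).
Proof. intros Wv; split; simpl; auto. Qed.

Lemma hat_between a b : checkI a -> checkI b -> plt a b ->
  exists v, W v /\ ointvI (Fin a) (Fin b) (v, TM).
Proof.
  intros [[Ia Ha] Ca] [[Ib Hb] Cb] [H|[E H]].
  - destruct (W_dense _ _ Ia Ib H) as [w [Ww Hw]]. exists w; split; auto.
    split; [apply hat_in_hatI; auto|]. simpl; unfold plt; simpl; split; left; lra.
  - destruct a as [x t], b as [y u]; simpl in *; subst y.
    exists x. destruct t, u; simpl in H; try contradiction.
    + destruct Ha as [Ha|Ha]; [|discriminate]. exfalso; tauto.
    + destruct Ha as [Ha|Ha]; [|discriminate].
      split; auto. split; [apply hat_in_hatI; auto|]. simpl; unfold plt; simpl; split; right; auto.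
    + destruct Hb as [Hb|Hb]; [|discriminate]. exfalso; tauto.
Qed.

Lemma hat_above p s : hatI p -> checkI s -> plt p s -> (forall w, p <> (w, TL)) ->
  exists v, W v /\ (p = (v, TM) \/ plt p (v, TM)) /\ plt (v, TM) s.
Proof.
  intros [Ip Hp] [[Is Hs] Cs] [H|[E H]] NL.
  - destruct (W_dense _ _ Ip Is H) as [w [Ww Hw]]. exists w; split; auto.
    unfold plt; simpl; split; [right; left; simpl; lra|left; simpl; lra].
  - destruct p as [x t], s as [y u]; simpl in *; subst y.
    exists x. destruct t, u; simpl in H; try contradiction; try solve [exfalso; apply (NL x); auto].
    destruct Hs as [Hs|Hs]; [|discriminate].
    split; [auto|split; [left; reflexivity|unfold plt; simpl; right; auto]].
Qed.

Lemma hat_below q s : hatI q -> checkI s -> plt s q -> (forall w, q <> (w, TR)) ->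
  exists v, W v /\ (q = (v, TM) \/ plt (v, TM) q) /\ plt s (v, TM).
Proof.
  intros [Iq Hq] [[Is Hs] Cs] [H|[E H]] NR.
  - destruct (W_dense _ _ Is Iq H) as [w [Ww Hw]]. exists w; split; auto.
    unfold plt; simpl; split; [right; left; simpl; lra|left; simpl; lra].
  - destruct q as [x t], s as [y u]; simpl in *; subst y.
    exists x. destruct u, t; simpl in H; try contradiction; try solve [exfalso; apply (NR x); auto].
    destruct Hs as [Hs|Hs]; [|discriminate].
    split; [auto|split; [left; reflexivity|unfold plt; simpl; right; auto]].
Qed.

Lemma height_check s : checkI s -> ht s = 0.
Proof. intros [_ C]; unfold height; destruct (excluded_middle_informative _); tauto. Qed.

Lemma height_hat v : W v -> ht (v, TM) = / K ^ gr v.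
Proof. intros Wv; unfold height; destruct (excluded_middle_informative _); simpl in *; tauto. Qed.

Lemma height_pos_hat s : 0 < ht s -> exists v, W v /\ s = (v, TM).
Proof.
  unfold height; destruct (excluded_middle_informative _) as [[Ws Es]|]; [|lra].
  intros _; exists (fst s); split; auto; destruct s; simpl in *; subst; auto.
Qed.

Definition is_max_height a b m :=
  (exists s, ointvI (Fin a) (Fin b) s /\ ht s = m) /\
  (forall s, ointvI (Fin a) (Fin b) s -> ht s <= m).

Lemma max_height_spec a b : checkI a -> checkI b -> plt a b ->
  is_max_height a b (max_height I W gr K a b).
Proof.
  intros Ca Cb Hab.
  destruct (hat_between a b Ca Cb Hab) as [v [Wv Hv]].
  set (G := fun n => exists u, W u /\ ointvI (Fin a) (Fin b) (u, TM) /\ gr u = n).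
  destruct (dec_inh_nat_subset_has_unique_least_element G) as [n0 [[[u [Wu [Hu <-]]] Hmin] _]].
  { intros n; apply classic. }
  { exists (gr v), v; auto. }
  unfold max_height; apply (epsilon_spec (inhabits 0) (is_max_height a b)).
  exists (/ K ^ gr u); split.
  - exists (u, TM); split; auto. apply height_hat; auto.
  - intros s Hs. destruct (Rlt_or_le 0 (ht s)) as [Hp|Hp].
    + destruct (height_pos_hat s Hp) as [w [Ww ->]]. rewrite height_hat by auto.
      apply Rinv_le_contravar; [apply pow_lt; lra|].
      apply Rle_pow; [lra|]. apply Hmin. exists w; auto.
    + apply Rle_trans with 0; auto. left; apply inv_pow_pos; lra.
Qed.

Definition between x y s := ointvI (Fin x) (Fin y) s \/ ointvI (Fin y) (Fin x) s.

Lemma between_sym x y s : between x y s -> between y x s.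
Proof. unfold between; tauto. Qed.

Lemma between_plt x y s : plt x y -> between x y s -> ointvI (Fin x) (Fin y) s.
Proof.
  intros H [Hs|[_ [A B]]]; auto; simpl in *.
  exfalso; apply (plt_asym _ _ H); eapply plt_trans; eauto.
Qed.

Lemma between_split x y z s : between x z s -> s = y \/ between x y s \/ between y z s.
Proof.
  intros [[Hs [A B]]|[Hs [A B]]]; simpl in *;
  destruct (plt_trichotomy s y) as [|[p|p]]; auto; right.
  - left; left; split; auto.
  - right; left; split; auto.
  - right; right; split; auto.
  - left; right; split; auto.
Qed.

Lemma dist_refl x : d x x = 0.
Proof. unfold division_metric; destruct (excluded_middle_informative _); tauto. Qed.

Lemma dist_sym x y : d x y = d y x.
Proof.
  unfold division_metric.
  destruct (excluded_middle_informative (x = y)), (excluded_middle_informative (y = x));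
    try congruence; auto.
  destruct (excluded_middle_informative (plt x y)) as [p1|p1],
           (excluded_middle_informative (plt y x)) as [p2|p2]; auto.
  - destruct (plt_asym _ _ p1 p2).
  - destruct (plt_trichotomy x y) as [|[|]]; tauto.
Qed.

Lemma dist_plt x y : plt x y -> d x y = max_height I W gr K x y.
Proof.
  intros H; unfold division_metric.
  destruct (excluded_middle_informative (x = y)) as [->|_]; [destruct (plt_irrefl _ H)|].
  destruct (excluded_middle_informative (plt x y)); tauto.
Qed.

Lemma dist_max x y : checkI x -> checkI y -> x <> y ->
  (exists s, between x y s /\ ht s = d x y) /\
  (forall s, between x y s -> ht s <= d x y).
Proof.
  intros Cx Cy nxy. destruct (plt_trichotomy x y) as [E|[H|H]]; [contradiction| |].
  - rewrite dist_plt by auto.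
    destruct (max_height_spec x y Cx Cy H) as [[s [Hs Es]] Hle].
    split; [exists s; split; [left|]; auto|].
    intros s' Hs'; apply Hle, between_plt; auto.
  - rewrite dist_sym, dist_plt by auto.
    destruct (max_height_spec y x Cy Cx H) as [[s [Hs Es]] Hle].
    split; [exists s; split; [right|]; auto|].
    intros s' Hs'; apply Hle, between_plt, between_sym; auto.
Qed.

Lemma height_le_dist x y s : checkI x -> checkI y -> between x y s -> ht s <= d x y.
Proof.
  intros Cx Cy Hs. destruct (classic (x = y)) as [<-|nxy].
  - destruct Hs as [[_ [A B]]|[_ [A B]]]; destruct (plt_asym _ _ A B).
  - apply (dist_max x y Cx Cy nxy); auto.
Qed.

Lemma dist_pos x y : checkI x -> checkI y -> x <> y -> 0 < d x y.
Proof.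
  intros Cx Cy nxy.
  assert (Hv : exists v, W v /\ between x y (v, TM)).
  { destruct (plt_trichotomy x y) as [E|[H|H]]; [contradiction| |].
    - destruct (hat_between x y Cx Cy H) as [v [Wv Hv]]; exists v; split; [auto|left; auto].
    - destruct (hat_between y x Cy Cx H) as [v [Wv Hv]]; exists v; split; [auto|right; auto]. }
  destruct Hv as [v [Wv Hv]].
  apply Rlt_le_trans with (ht (v, TM)); [|apply height_le_dist; auto].
  rewrite height_hat by auto. apply inv_pow_pos; lra.
Qed.

Lemma dist_nonneg x y : checkI x -> checkI y -> 0 <= d x y.
Proof.
  intros Cx Cy. destruct (classic (x = y)) as [<-|nxy].
  - rewrite dist_refl; lra.
  - left; apply dist_pos; auto.
Qed.

Lemma dist_ultrametric x y z : checkI x -> checkI y -> checkI z ->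
  d x z <= Rmax (d x y) (d y z).
Proof.
  intros Cx Cy Cz.
  assert (Dxy : d x y <= Rmax (d x y) (d y z)) by apply Rmax_l.
  assert (Dyz : d y z <= Rmax (d x y) (d y z)) by apply Rmax_r.
  pose proof (dist_nonneg x y Cx Cy) as Nxy.
  destruct (classic (x = z)) as [<-|nxz]. { rewrite dist_refl; lra. }
  destruct (dist_max x z Cx Cz nxz) as [[s [Hs <-]] _].
  destruct (between_split x y z s Hs) as [->|[Bxy|Byz]].
  - rewrite height_check by auto; lra.
  - pose proof (height_le_dist x y s Cx Cy Bxy); lra.
  - pose proof (height_le_dist y z s Cy Cz Byz); lra.
Qed.

Lemma division_metric_is_metric : is_metric_on checkI d.
Proof.
  intros x y z Cx Cy Cz.
  pose proof (dist_nonneg x y Cx Cy). pose proof (dist_nonneg y z Cy Cz).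
  split; [auto|split; [split|split]].
  - intros E. destruct (classic (x = y)) as [|nxy]; auto.
    pose proof (dist_pos x y Cx Cy nxy); lra.
  - intros <-; apply dist_refl.
  - apply dist_sym.
  - apply Rle_trans with (Rmax (d x y) (d y z)); [apply dist_ultrametric; auto|].
    apply Rmax_lub; lra.
Qed.

Lemma dist_lt_hat_above v s t : W v -> checkI s -> checkI t ->
  plt (v, TM) s -> d s t < / K ^ gr v -> plt (v, TM) t.
Proof.
  intros Wv Cs Ct Hvs Hst.
  destruct (plt_trichotomy (v, TM) t) as [<-|[H|H]]; auto; exfalso.
  - destruct Ct as [_ Ct]; apply Ct; simpl; auto.
  - assert (Hb : between s t (v, TM)) by (right; split; [apply hat_in_hatI|simpl]; auto).
    pose proof (height_le_dist s t _ Cs Ct Hb) as Hle.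
    rewrite height_hat in Hle by auto; lra.
Qed.

Lemma dist_lt_hat_below v s t : W v -> checkI s -> checkI t ->
  plt s (v, TM) -> d s t < / K ^ gr v -> plt t (v, TM).
Proof.
  intros Wv Cs Ct Hsv Hst.
  destruct (plt_trichotomy (v, TM) t) as [<-|[H|H]]; auto; exfalso.
  - destruct Ct as [_ Ct]; apply Ct; simpl; auto.
  - assert (Hb : between s t (v, TM)) by (left; split; [apply hat_in_hatI|simpl]; auto).
    pose proof (height_le_dist s t _ Cs Ct Hb) as Hle.
    rewrite height_hat in Hle by auto; lra.
Qed.

Lemma ball_in_above a s : ext_ok I W a -> (forall w, a <> Fin (w, TL)) ->
  checkI s -> above a s ->
  exists e, 0 < e /\ forall t, checkI t -> d s t < e -> above a t.
Proof.
  intros Ha NL Cs As. destruct a as [|p|]; simpl in As; [| |contradiction].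
  - exists 1; split; [lra|]; simpl; auto.
  - destruct (hat_above p s Ha Cs As) as [v [Wv [Hpv Hvs]]].
    { intros w E; apply (NL w); congruence. }
    exists (/ K ^ gr v); split; [apply inv_pow_pos; lra|].
    intros t Ct Hst; simpl.
    pose proof (dist_lt_hat_above v s t Wv Cs Ct Hvs Hst).
    destruct Hpv as [->|Hpv]; [auto|eapply plt_trans; eauto].
Qed.

Lemma ball_in_below b s : ext_ok I W b -> (forall w, b <> Fin (w, TR)) ->
  checkI s -> below b s ->
  exists e, 0 < e /\ forall t, checkI t -> d s t < e -> below b t.
Proof.
  intros Hb NR Cs Bs. destruct b as [|q|]; simpl in Bs; [contradiction| |].
  - destruct (hat_below q s Hb Cs Bs) as [v [Wv [Hvq Hsv]]].
    { intros w E; apply (NR w); congruence. }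
    exists (/ K ^ gr v); split; [apply inv_pow_pos; lra|].
    intros t Ct Hst; simpl.
    pose proof (dist_lt_hat_below v s t Wv Cs Ct Hsv Hst).
    destruct Hvq as [->|Hvq]; [auto|eapply plt_trans; eauto].
  - exists 1; split; [lra|]; simpl; auto.
Qed.

Lemma ball_in_basis_interval B s : basis_interval I W B -> checkI s -> B s ->
  exists e, 0 < e /\ forall t, checkI t -> d s t < e -> B t.
Proof.
  intros [a [b [Ha [Hb [_ [NL [NR HB]]]]]]] Cs Bs.
  apply HB in Bs as [_ [As Bs]].
  destruct (ball_in_above a s Ha NL Cs As) as [e1 [He1 H1]].
  destruct (ball_in_below b s Hb NR Cs Bs) as [e2 [He2 H2]].
  exists (Rmin e1 e2); split; [apply Rmin_glb_lt; auto|].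
  intros t Ct Hst. apply HB. split; [apply Ct|split].
  - apply H1; auto. eapply Rlt_le_trans; [exact Hst|apply Rmin_l].
  - apply H2; auto. eapply Rlt_le_trans; [exact Hst|apply Rmin_r].
Qed.

Lemma ball_in_basis_intervals Bs s :
  Forall (basis_interval I W) Bs -> checkI s -> Forall (fun B => B s) Bs ->
  exists e, 0 < e /\ forall t, checkI t -> d s t < e -> Forall (fun B => B t) Bs.
Proof.
  intros HB Cs Hs. induction Bs as [|B Bs IH].
  - exists 1; split; [lra|]; auto.
  - inversion HB as [|? ? HB1 HB2]; inversion Hs as [|? ? Hs1 Hs2]; subst.
    destruct (IH HB2 Hs2) as [e1 [He1 G1]].
    destruct (ball_in_basis_interval B s HB1 Cs Hs1) as [e2 [He2 G2]].
    exists (Rmin e1 e2); split; [apply Rmin_glb_lt; auto|].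
    intros t Ct Hst. constructor.
    + apply G2; auto. eapply Rlt_le_trans; [exact Hst|apply Rmin_r].
    + apply G1; auto. eapply Rlt_le_trans; [exact Hst|apply Rmin_l].
Qed.

Lemma metric_open_of_check_open V : check_open I W V -> metric_open checkI d V.
Proof.
  intros [U [[_ HU] HV]]. split.
  - intros s Vs; apply HV in Vs; tauto.
  - intros s Vs. apply HV in Vs as [Us Cs].
    destruct (HU s Us) as [Bs [FB [Fs HBU]]].
    destruct (ball_in_basis_intervals Bs s FB Cs Fs) as [e [He Hball]].
    exists e; split; auto. intros t Ct Hst.
    apply HV; split; auto. apply HBU; [apply Ct|auto].
Qed.

Lemma low_grades_finite N : exists L, forall w, W w -> (gr w < N)%nat -> In w L.
Proof.
  induction N as [|N [L HL]].
  - exists nil; intros; lia.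
  - destruct (grade_fibers_finite N) as [l Hl]. exists (l ++ L).
    intros w Ww Hw. apply in_or_app.
    destruct (Nat.eq_dec (gr w) N); [left; auto|right; apply HL; auto; lia].
Qed.

Lemma heavy_points_finite e : 0 < e -> exists L, forall v, W v -> e <= / K ^ gr v -> In v L.
Proof.
  intros He. destruct (inv_pow_ge_bounded K e K_gt_1 He) as [N HN].
  destruct (low_grades_finite N) as [L HL]. exists L; auto.
Qed.

Lemma heavy_free_left_end s e : checkI s -> 0 < e ->
  exists a, ext_ok I W a /\ (forall w, a <> Fin (w, TL)) /\ above a s /\
    forall v, W v -> e <= / K ^ gr v -> plt (v, TM) s -> ~ above a (v, TM).
Proof.
  intros Cs He. destruct (heavy_points_finite e He) as [L HL].
  set (P := fun v => W v /\ e <= / K ^ gr v /\ plt (v, TM) s).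
  destruct (classic (exists v, In v L /\ P v)) as [E|NE].
  - destruct (list_max_exists Rle L P) as [m [_ [[Wm [_ Pm]] Mm]]]; auto.
    { intros x y; destruct (Rle_lt_dec x y); [left|right]; lra. }
    { intros x y z; lra. }
    exists (Fin (m, TM)); split; [apply hat_in_hatI; auto|].
    split; [intros w E'; discriminate E'|split; [exact Pm|]].
    intros v Wv Ev Pv Av. apply plt_hat in Av.
    specialize (Mm v (HL v Wv Ev) (conj Wv (conj Ev Pv))); lra.
  - exists NegInf; split; [simpl; trivial|].
    split; [intros w E'; discriminate E'|split; [simpl; trivial|]].
    intros v Wv Ev Pv _. apply NE; exists v; split; [apply HL|split]; auto.
Qed.

Lemma heavy_free_right_end s e : checkI s -> 0 < e ->
  exists b, ext_ok I W b /\ (forall w, b <> Fin (w, TR)) /\ below b s /\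
    forall v, W v -> e <= / K ^ gr v -> plt s (v, TM) -> ~ below b (v, TM).
Proof.
  intros Cs He. destruct (heavy_points_finite e He) as [L HL].
  set (P := fun v => W v /\ e <= / K ^ gr v /\ plt s (v, TM)).
  destruct (classic (exists v, In v L /\ P v)) as [E|NE].
  - destruct (list_max_exists Rge L P) as [m [_ [[Wm [_ Pm]] Mm]]]; auto.
    { intros x y; destruct (Rle_lt_dec x y); [right|left]; lra. }
    { intros x y z; lra. }
    exists (Fin (m, TM)); split; [apply hat_in_hatI; auto|].
    split; [intros w E'; discriminate E'|split; [exact Pm|]].
    intros v Wv Ev Pv Bv. apply plt_hat in Bv.
    specialize (Mm v (HL v Wv Ev) (conj Wv (conj Ev Pv))); lra.
  - exists PosInf; split; [simpl; trivial|].
    split; [intros w E'; discriminate E'|split; [simpl; trivial|]].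
    intros v Wv Ev Pv _. apply NE; exists v; split; [apply HL|split]; auto.
Qed.

Lemma ointv_convex a b x y z :
  ointvI a b x -> ointvI a b y -> between x y z -> ointvI a b z.
Proof.
  intros [_ [Ax Bx]] [_ [Ay By]] [[Hz [P Q]]|[Hz [P Q]]]; simpl in *.
  - split; [auto|split]; [exact (above_plt _ _ _ Ax P)|exact (below_plt _ _ _ By Q)].
  - split; [auto|split]; [exact (above_plt _ _ _ Ay P)|exact (below_plt _ _ _ Bx Q)].
Qed.

Lemma basis_interval_in_ball s e : checkI s -> 0 < e ->
  exists B, basis_interval I W B /\ B s /\ forall t, checkI t -> B t -> d s t < e.
Proof.
  intros Cs He.
  destruct (heavy_free_left_end s e Cs He) as [a [Ha [NL [As Ma]]]].
  destruct (heavy_free_right_end s e Cs He) as [b [Hb [NR [Bs Mb]]]].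
  assert (Os : ointvI a b s) by (split; [apply Cs|auto]).
  exists (ointvI a b); split.
  { exists a, b; split; [|split; [|split; [exists s|split; [|split]]]]; auto; tauto. }
  split; [exact Os|]. intros t Ct Ot.
  destruct (classic (s = t)) as [<-|nst]. { rewrite dist_refl; lra. }
  destruct (dist_max s t Cs Ct nst) as [[u [Hu <-]] _].
  destruct (Rlt_or_le (ht u) e) as [|Hge]; auto; exfalso.
  destruct (height_pos_hat u) as [v [Wv ->]]; [lra|].
  rewrite height_hat in Hge by auto.
  destruct (ointv_convex a b s t (v, TM) Os Ot Hu) as [_ [Av Bv]].
  destruct (plt_trichotomy s (v, TM)) as [E|[P|P]].
  - destruct Cs as [_ Cs]; apply Cs; rewrite E; simpl; auto.
  - exact (Mb v Wv Hge P Bv).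
  - exact (Ma v Wv Hge P Av).
Qed.

Lemma check_open_of_metric_open V : metric_open checkI d V -> check_open I W V.
Proof.
  intros [HX HV].
  exists (fun s => exists B, basis_interval I W B /\ B s /\
                    forall t, checkI t -> B t -> V t).
  split; [split|].
  - intros s [B [[a [b [_ [_ [_ [_ [_ HB]]]]]]] [Bs _]]]. apply HB in Bs; apply Bs.
  - intros s [B [HBi [Bs HBV]]]. exists (B :: nil).
    split; [constructor; auto|]. split; [constructor; auto|].
    intros t _ Ft. inversion Ft; subst. exists B; auto.
  - intros s; split.
    + intros Vs; split; [|apply HX; auto].
      destruct (HV s Vs) as [e [He Hball]].
      destruct (basis_interval_in_ball s e (HX s Vs) He) as [B [HBi [Bs HBd]]].
      exists B; split; [auto|split; [auto|]]. intros t Ct Bt; apply Hball; auto.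
    + intros [[B [_ [Bs HBV]]] Cs]; apply HBV; auto.
Qed.

Lemma metric_open_iff_check_open V : metric_open checkI d V <-> check_open I W V.
Proof. split; [apply check_open_of_metric_open|apply metric_open_of_check_open]. Qed.

End DivisionMetric.

Theorem mainTheorem8 (lo hi : option R) (W : R -> Prop) (gr : R -> nat) (K : R) :
  (forall w, W w -> ointerval lo hi w) ->
  (exists f : nat -> R, forall w, W w -> exists n, f n = w) ->
  (forall x y, ointerval lo hi x -> ointerval lo hi y -> x < y ->
     exists w, W w /\ x < w < y) ->
  (forall n : nat, exists l : list R, forall w, W w -> gr w = n -> In w l) ->
  1 < K ->
  is_metric_on (inCheck (ointerval lo hi) W)
               (division_metric (ointerval lo hi) W gr K) /\
  (forall V : pt -> Prop,
     metric_open (inCheck (ointerval lo hi) W)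
                 (division_metric (ointerval lo hi) W gr K) V
     <-> check_open (ointerval lo hi) W V).
Proof.
  intros W_in_I _ W_dense grade_fibers_finite K_gt_1. split.
  - exact (division_metric_is_metric _ W gr K W_in_I W_dense K_gt_1).
  - exact (metric_open_iff_check_open _ W gr K W_in_I W_dense K_gt_1 grade_fibers_finite).
Qed.
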